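(* Let $q$ be a prime power and $n\ge3$. Then $\chi_{n-1}\!\left(\binom n2\times n,q\right)\ge q^n-1$.
   Context: For positive integers $N\ge n$, $\mathbb{F}_q^{N\times n}$ is the set of $N\times n$ matrices over $\mathbb{F}_q$. An exactly $d$-distance coloring is a map $\Gamma:\mathbb{F}_q^{N\times n}\to\{1,\dots,L\}$ such that $\Gamma(M_1)\ne\Gamma(M_2)$ whenever $\mathrm{Rk}(M_1-M_2)=d$. $\chi_d(N\times n,q)$ denotes the minimum number $L$ of colors in an exactly $d$-distance coloring; here $N=\binom n2$. *)

From HB Require Import structures.
From mathcomp Require Import all_boot all_order all_algebra all_field.
Set Implicit Arguments. Unset Strict Implicit. Unset Printing Implicit Defensive.
Import GRing.Theory.
Local Open Scope ring_scope.

Definition exactly_distance_coloring (F : fieldType) (N n d L : nat)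
  (Gamma : 'M[F]_(N, n) -> 'I_L) : Prop :=
  forall M1 M2 : 'M[F]_(N, n), \rank (M1 - M2) = d -> Gamma M1 <> Gamma M2.

Arguments exactly_distance_coloring {F N n} d {L} Gamma.

From HB Require Import structures.
From mathcomp Require Import all_boot all_order all_algebra all_field.
From mathcomp Require Import ring.
Set Implicit Arguments. Unset Strict Implicit. Unset Printing Implicit Defensive.
Import GRing.Theory.
Local Open Scope ring_scope.

(* For v in F^n let W(v) be the C(n,2) x n matrix whose row indexed by the pair
   i < j is v_i e_j - v_j e_i.  The map W is linear, and for v <> 0 a vector u
   satisfies W(v) u = 0 iff v_i u_j = v_j u_i for all i < j, i.e. iff u is a
   multiple of v; hence W(v) has rank n - 1.  So the q^n matrices W(v) are at
   rank distance exactly n - 1 from each other, and an exactly (n-1)-distance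
   coloring must give them q^n distinct colors.  This holds for every n. *)

Definition ltn_pairs n := [set t : 2.-tuple 'I_n | sorted ltn [seq val i | i <- t]].

Lemma card_ltn_pairs n : #|ltn_pairs n| = 'C(n, 2).
Proof. exact: card_ltn_sorted_tuples. Qed.

Definition pair_of n (r : 'I_('C(n, 2))) : 2.-tuple 'I_n :=
  enum_val (cast_ord (esym (card_ltn_pairs n)) r).

Notation fst_of r := (tnth (pair_of r) ord0).
Notation snd_of r := (tnth (pair_of r) ord_max).

Lemma pair_of_surj n (i j : 'I_n) : (i < j)%N ->
  exists r, fst_of r = i /\ snd_of r = j.
Proof.
move=> lt_ij; have ij_pair : [tuple i; j] \in ltn_pairs n by rewrite inE /= lt_ij.
exists (cast_ord (card_ltn_pairs n) (enum_rank_in ij_pair [tuple i; j])).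
by rewrite /pair_of cast_ordK enum_rankK_in.
Qed.

Section WedgeMatrix.

Variables (F : fieldType) (n : nat).

Definition wedge_mx (v : 'rV[F]_n) : 'M[F]_('C(n, 2), n) :=
  \matrix_(r, c) (v 0 (fst_of r) * (c == snd_of r)%:R
                  - v 0 (snd_of r) * (c == fst_of r)%:R).

Lemma wedge_mxB (v w : 'rV[F]_n) : wedge_mx v - wedge_mx w = wedge_mx (v - w).
Proof. by apply/matrixP => r c; rewrite !mxE; ring. Qed.

Lemma sumr_mul_delta (f : 'I_n -> F) j : \sum_c f c * (c == j)%:R = f j.
Proof.
by rewrite (bigD1 j) //= eqxx mulr1 big1 ?addr0 // => c /negbTE->; rewrite mulr0.
Qed.

Lemma wedge_mx_mul (v u : 'rV[F]_n) r :
  (wedge_mx v *m u^T) r 0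
    = v 0 (fst_of r) * u 0 (snd_of r) - v 0 (snd_of r) * u 0 (fst_of r).
Proof.
rewrite mxE (eq_bigr (fun c => v 0 (fst_of r) * (u 0 c * (c == snd_of r)%:R)
                           - v 0 (snd_of r) * (u 0 c * (c == fst_of r)%:R))).
  by rewrite sumrB -!mulr_sumr !sumr_mul_delta.
by move=> c _; rewrite !mxE; ring.
Qed.

Lemma rV_proportional (v u : 'rV[F]_n) : v != 0 ->
  (forall i j : 'I_n, (i < j)%N -> v 0 i * u 0 j = v 0 j * u 0 i) ->
  (u <= v)%MS.
Proof.
move=> v_nz cross.
have [k vk_nz] : exists k, v 0 k != 0.
  apply/existsP; apply: contraR v_nz => /existsPn v0.
  by apply/eqP/matrixP => a b; rewrite ord1 mxE; apply/eqP; rewrite -[_ == _]negbK v0.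
apply/sub_rVP; exists (u 0 k / v 0 k); apply/matrixP => a j; rewrite ord1 mxE.
apply: (mulfI vk_nz); rewrite mulrA mulrCA divff // mulr1.
by case: (ltngtP k j) => [/cross->|/cross<-|/val_inj->]; rewrite mulrC.
Qed.

Lemma kermx_tr_wedge (v : 'rV[F]_n) : v != 0 -> (kermx (wedge_mx v)^T == v)%MS.
Proof.
move=> v_nz; apply/andP; split.
  apply/row_subP => i; apply: rV_proportional => // a b lt_ab.
  have := mulmx_ker (wedge_mx v)^T.
  move/(congr1 (row i)); rewrite row_mul row0 => /(congr1 trmx).
  rewrite trmx_mul trmxK trmx0 => /matrixP Wu0.
  have [r [<- <-]] := pair_of_surj lt_ab; apply/eqP; rewrite -subr_eq0.
  by rewrite -wedge_mx_mul Wu0 mxE.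
rewrite sub_kermx; apply/eqP; apply: trmx_inj; rewrite trmx_mul trmxK trmx0.
by apply/matrixP => r c; rewrite ord1 wedge_mx_mul mxE mulrC subrr.
Qed.

Lemma rank_wedge_mx (v : 'rV[F]_n) : v != 0 -> \rank (wedge_mx v) = (n - 1)%N.
Proof.
move=> v_nz; have := mxrank_ker (wedge_mx v)^T.
rewrite (eqmx_rank (kermx_tr_wedge v_nz)) rank_rV v_nz mxrank_tr /= => rank_ker.
by rewrite [in RHS]rank_ker subKn // rank_leq_col.
Qed.
End WedgeMatrix.

Lemma card_le_coloring_clique (F : fieldType) (N n d L : nat) (T : finType)
    (f : T -> 'M[F]_(N, n)) (Gamma : 'M[F]_(N, n) -> 'I_L) :
  (forall x y, x != y -> \rank (f x - f y) = d) ->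
  exactly_distance_coloring d Gamma -> (#|T| <= L)%N.
Proof.
move=> clique col; rewrite -[L]card_ord; apply: (@leq_card _ _ (Gamma \o f)).
move=> x y /= same_color; apply/eqP; apply: contraT => /clique rk.
by case: (col _ _ rk same_color).
Qed.

Local Close Scope ring_scope.

Theorem proposition4p3 (F : finFieldType) (n : nat) (hn : 3 <= n)
  (L : nat) (Gamma : 'M[F]_('C(n, 2), n) -> 'I_L) :
  exactly_distance_coloring (n - 1) Gamma ->
  #|F| ^ n - 1 <= L.
Proof.
move=> col; apply: leq_trans (leq_subr 1 _) _.
rewrite -[n in #|F| ^ n]mul1n -card_mx.
apply: (card_le_coloring_clique (f := @wedge_mx F n) _ col) => v w ne_vw.
by rewrite wedge_mxB rank_wedge_mx // subr_eq0.
Qed.
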